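(* Let $E>0$, $\epsilon>0$ with $1-2\epsilon\ge0$, and let $B\in\mathbb R^3$ be a unit vector. Let $\mu,\mu_1,\mu_2$ be distinct points on the sphere $\sqrt E S^2=\{x\in\mathbb R^3:|x|=\sqrt E\}$, and assume that $$\left\langle\frac{\mu_i-\mu}{|\mu_i-\mu|},B\right\rangle>\sqrt{1-2\epsilon}\quad\text{for } i=1,2.$$ Then $|\mu_2-\mu_1|\le16\sqrt{\epsilon E}$. *)

From mathcomp Require Import all_boot all_order all_algebra.
From mathcomp Require Import reals.
Set Implicit Arguments. Unset Strict Implicit. Unset Printing Implicit Defensive.
Import Order.TTheory GRing.Theory Num.Theory.
Local Open Scope ring_scope.

Definition dotv (R : realType) (n : nat) (u v : 'rV[R]_n) : R :=
  \sum_(i < n) u 0 i * v 0 i.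

Definition enorm (R : realType) (n : nat) (u : 'rV[R]_n) : R :=
  Num.sqrt (dotv u u).

From mathcomp Require Import all_boot all_order all_algebra.
From mathcomp Require Import reals ring lra.
Import Order.TTheory GRing.Theory Num.Theory.
Local Open Scope ring_scope.

(* Write [mu_i - mu = d_i *: b_i] with [b_i] a unit vector.  Since [mu_i] and
   [mu] lie on the same sphere, the chord length is [d_i = -2 <mu, b_i>], so
   [|d_2 - d_1| <= 2 sqrt E |b_2 - b_1|] and [d_2 <= 2 sqrt E].  The angle
   condition gives [|b_i - B|^2 = 2 - 2 <b_i, B> < 4 eps], hence
   [|b_2 - b_1| < 4 sqrt eps], and
   [mu_2 - mu_1 = d_2 *: (b_2 - b_1) + (d_2 - d_1) *: b_1] is bounded by
   [8 sqrt (eps E) + 8 sqrt (eps E)]. *)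

Section InnerProduct.
Context {R : realType} {n : nat}.
Implicit Types (u v w : 'rV[R]_n) (a : R).

Lemma dotvC u v : dotv u v = dotv v u.
Proof. by apply: eq_bigr => i _; rewrite mulrC. Qed.

Lemma dotvDl u v w : dotv (u + v) w = dotv u w + dotv v w.
Proof. by rewrite /dotv -big_split; apply: eq_bigr => i _; rewrite !mxE mulrDl. Qed.

Lemma dotvZl a u w : dotv (a *: u) w = a * dotv u w.
Proof. by rewrite /dotv mulr_sumr; apply: eq_bigr => i _; rewrite !mxE mulrA. Qed.

Lemma dotvNl u w : dotv (- u) w = - dotv u w.
Proof. by rewrite -scaleN1r dotvZl mulN1r. Qed.

Lemma dotvBl u v w : dotv (u - v) w = dotv u w - dotv v w.
Proof. by rewrite dotvDl dotvNl. Qed.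

Lemma dotvDr u v w : dotv w (u + v) = dotv w u + dotv w v.
Proof. by rewrite !(dotvC w) dotvDl. Qed.

Lemma dotvZr a u w : dotv w (a *: u) = a * dotv w u.
Proof. by rewrite !(dotvC w) dotvZl. Qed.

Lemma dotvNr u w : dotv w (- u) = - dotv w u.
Proof. by rewrite !(dotvC w) dotvNl. Qed.

Lemma dotvBr u v w : dotv w (u - v) = dotv w u - dotv w v.
Proof. by rewrite dotvDr dotvNr. Qed.

Lemma dotv0r u : dotv u 0 = 0.
Proof. by rewrite -(scale0r 0) dotvZr mul0r. Qed.

Lemma dotvv_ge0 u : 0 <= dotv u u.
Proof. by rewrite sumr_ge0 // => i _; rewrite -expr2 sqr_ge0. Qed.

Lemma dotvv_eq0 u : dotv u u = 0 -> u = 0.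
Proof.
move/eqP; rewrite psumr_eq0 => [/allP u0|i _]; last by rewrite -expr2 sqr_ge0.
apply/rowP => i; rewrite mxE; apply/eqP.
by rewrite -sqrf_eq0 expr2 (implyP (u0 i (mem_index_enum i))).
Qed.

Lemma dotv_sqr_le u v : dotv u v ^+ 2 <= dotv u u * dotv v v.
Proof.
have [/dotvv_eq0 ->|vv0] := eqVneq (dotv v v) 0.
  by rewrite !dotv0r expr0n mulr0.
have vv_gt0 : 0 < dotv v v by rewrite lt0r vv0 dotvv_ge0.
(* expand [0 <= |<v,v> u - <u,v> v|^2 = <v,v> (<u,u><v,v> - <u,v>^2)] *)
have := dotvv_ge0 (dotv v v *: u - dotv u v *: v).
rewrite !(dotvBl, dotvBr, dotvZl, dotvZr) (dotvC v u).
move=> expansion_ge0; rewrite -subr_ge0 -(pmulr_rge0 _ vv_gt0).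
by apply: le_trans expansion_ge0 _; rewrite le_eqVlt; apply/orP; left; apply/eqP; ring.
Qed.

Lemma enorm_ge0 u : 0 <= enorm u.
Proof. exact: sqrtr_ge0. Qed.

Lemma enorm_sqr u : enorm u ^+ 2 = dotv u u.
Proof. by rewrite sqr_sqrtr ?dotvv_ge0. Qed.

Lemma enorm_eq0 u : (enorm u == 0) = (u == 0).
Proof.
apply/idP/eqP => [|->]; last by rewrite /enorm dotv0r sqrtr0.
by rewrite -sqrf_eq0 enorm_sqr => /eqP /dotvv_eq0.
Qed.

Lemma normr_dotv_le u v : `|dotv u v| <= enorm u * enorm v.
Proof.
rewrite -ler_sqr ?nnegrE ?mulr_ge0 ?enorm_ge0 // real_normK ?num_real //.
by rewrite exprMn !enorm_sqr dotv_sqr_le.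
Qed.

Lemma dotv_le u v : dotv u v <= enorm u * enorm v.
Proof. exact: le_trans (ler_norm _) (normr_dotv_le u v). Qed.

Lemma enormD u v : enorm (u + v) <= enorm u + enorm v.
Proof.
rewrite -ler_sqr ?nnegrE ?addr_ge0 ?enorm_ge0 // sqrrD !enorm_sqr.
rewrite dotvDl !dotvDr (dotvC v u); have := dotv_le u v; lra.
Qed.

Lemma enormZ a u : enorm (a *: u) = `|a| * enorm u.
Proof. by rewrite /enorm dotvZl dotvZr mulrA -expr2 sqrtrM ?sqr_ge0 // sqrtr_sqr. Qed.

Lemma enormN u : enorm (- u) = enorm u.
Proof. by rewrite -scaleN1r enormZ normrN1 mul1r. Qed.

Lemma enormB u v : enorm (u - v) <= enorm u + enorm v.
Proof. by rewrite -(enormN v) enormD. Qed.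

Definition normalize u := (enorm u)^-1 *: u.

Lemma enorm_normalize u : u != 0 -> enorm (normalize u) = 1.
Proof.
rewrite -enorm_eq0 => u0.
by rewrite enormZ ger0_norm ?invr_ge0 ?enorm_ge0 // mulVf.
Qed.

Lemma normalizeK u : enorm u *: normalize u = u.
Proof.
have [->|] := eqVneq u 0; first by rewrite /normalize !scaler0.
by rewrite -enorm_eq0 => u0; rewrite scalerA divff // scale1r.
Qed.

Lemma sphere_chord_length (mu b : 'rV[R]_n) d :
  enorm (mu + d *: b) = enorm mu -> enorm b = 1 -> d != 0 ->
  d = -2 * dotv mu b.
Proof.
move=> /(congr1 (fun x => x ^+ 2)); rewrite !enorm_sqr => e b1 d0.
move: e; rewrite dotvDl !dotvDr !dotvZl !dotvZr -(enorm_sqr b) b1 (dotvC b mu).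
move=> e; have /eqP : d * (d + 2 * dotv mu b) = 0 by lra.
by rewrite mulf_eq0 (negbTE d0) /= addr_eq0 => /eqP ->; rewrite mulNr.
Qed.

Lemma abs_chord_length_le (mu b : 'rV[R]_n) : enorm b = 1 -> `|-2 * dotv mu b| <= 2 * enorm mu.
Proof.
move=> b1; rewrite normrM normrN normr_nat ler_pM2l //.
by have := normr_dotv_le mu b; rewrite b1 mulr1.
Qed.

Lemma enorm_sub_unit_lt (b B : 'rV[R]_n) eps :
  enorm b = 1 -> enorm B = 1 -> 0 <= eps -> 0 <= 1 - 2 * eps ->
  Num.sqrt (1 - 2 * eps) < dotv b B -> enorm (b - B) < 2 * Num.sqrt eps.
Proof.
move=> b1 B1 eps0 s0 hbB.
rewrite -ltr_sqr ?nnegrE ?mulr_ge0 ?sqrtr_ge0 ?enorm_ge0 //.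
rewrite exprMn (sqr_sqrtr eps0) enorm_sqr dotvBl !dotvBr -!enorm_sqr b1 B1 (dotvC B b).
rewrite expr1n; set s := Num.sqrt (1 - 2 * eps) in hbB.
have s_le1 : s <= 1 by rewrite -sqrtr1 ler_sqrt //; lra.
have s_ge0 : 0 <= s := sqrtr_ge0 _.
have : s * s = 1 - 2 * eps by rewrite -expr2 sqr_sqrtr.
have : s * s <= s by rewrite ler_piMr.
lra.
Qed.

Lemma sphere_chord_direction (mu v B : 'rV[R]_n) eps :
  enorm v = enorm mu -> enorm B = 1 -> 0 <= eps -> 0 <= 1 - 2 * eps ->
  Num.sqrt (1 - 2 * eps) < dotv (normalize (v - mu)) B ->
  [/\ enorm (v - mu) = -2 * dotv mu (normalize (v - mu)),
      enorm (normalize (v - mu)) = 1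
    & enorm (normalize (v - mu) - B) < 2 * Num.sqrt eps].
Proof.
move=> nv B1 eps0 s0 angle.
have vmu0 : v - mu != 0.
  by apply: contraTneq angle => ->; rewrite /normalize scaler0 dotvC dotv0r -leNgt sqrtr_ge0.
have b1 := @enorm_normalize (v - mu) vmu0.
split=> //; last exact: enorm_sub_unit_lt.
by apply: sphere_chord_length; rewrite // ?enorm_eq0 // normalizeK addrC subrK.
Qed.

End InnerProduct.

Theorem lemma5p5 (R : realType) (E eps : R) (B mu mu1 mu2 : 'rV[R]_3) :
  0 < E -> 0 < eps -> 0 <= 1 - 2 * eps ->
  enorm B = 1 ->
  enorm mu = Num.sqrt E -> enorm mu1 = Num.sqrt E -> enorm mu2 = Num.sqrt E ->
  mu != mu1 -> mu != mu2 -> mu1 != mu2 ->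
  dotv ((enorm (mu1 - mu))^-1 *: (mu1 - mu)) B > Num.sqrt (1 - 2 * eps) ->
  dotv ((enorm (mu2 - mu))^-1 *: (mu2 - mu)) B > Num.sqrt (1 - 2 * eps) ->
  enorm (mu2 - mu1) <= 16 * Num.sqrt (eps * E).
Proof.
(* Distinctness is implied by the angle conditions: at [mu_i = mu] the left side is [0]. *)
move=> E0 eps0 s0 nB nm nm1 nm2 _ _ _ h1 h2.
rewrite -nm in nm1 nm2.
have [d1E nb1 hb1] := sphere_chord_direction mu mu1 B eps nm1 nB (ltW eps0) s0 h1.
have [d2E nb2 hb2] := sphere_chord_direction mu mu2 B eps nm2 nB (ltW eps0) s0 h2.
set d1 := enorm (mu1 - mu) in d1E; set d2 := enorm (mu2 - mu) in d2E.
set b1 := normalize (mu1 - mu) in d1E nb1 hb1.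
set b2 := normalize (mu2 - mu) in d2E nb2 hb2.
have -> : mu2 - mu1 = d2 *: (b2 - b1) + (d2 - d1) *: b1.
  rewrite scalerBr scalerBl addrA subrK !normalizeK.
  by rewrite opprB addrA subrK.
have db : enorm (b2 - b1) < 4 * Num.sqrt eps.
  have := enormB (b2 - B) (b1 - B); rewrite opprB addrA subrK; lra.
have d2_ge0 : 0 <= d2 := enorm_ge0 _.
have d2_le : d2 <= 2 * Num.sqrt E.
  by have := abs_chord_length_le mu b2 nb2; rewrite -d2E nm ger0_norm.
have dd : `|d2 - d1| <= 2 * Num.sqrt E * enorm (b2 - b1).
  have -> : d2 - d1 = -2 * dotv mu (b2 - b1) by rewrite d1E d2E dotvBr mulrBr.
  by rewrite normrM normrN normr_nat -nm -mulrA ler_pM2l // normr_dotv_le.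
apply: le_trans (enormD _ _) _.
rewrite (enormZ d2) (enormZ (d2 - d1)) nb1 mulr1 ger0_norm // sqrtrM ?(ltW eps0) //.
have x_ge0 := enorm_ge0 (b2 - b1).
have E_ge0 := sqrtr_ge0 E.
have d2_term : d2 * enorm (b2 - b1) <= 2 * Num.sqrt E * (4 * Num.sqrt eps).
  by rewrite ler_pM // ltW.
have dd_term : 2 * Num.sqrt E * enorm (b2 - b1) <= 2 * Num.sqrt E * (4 * Num.sqrt eps).
  by rewrite ler_wpM2l ?mulr_ge0 // ltW.
have -> : 16 * (Num.sqrt eps * Num.sqrt E)
    = 2 * Num.sqrt E * (4 * Num.sqrt eps) + 2 * Num.sqrt E * (4 * Num.sqrt eps) by ring.
exact: lerD d2_term (le_trans dd dd_term).
Qed.
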